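(* Let $S$ be a set and $n\le N$ positive integers. For every $\mu\in\mathscr N_n(S)$ there exist real numbers $c(\mu,\nu)$, $\nu\in\mathscr N_N(S)$, all but finitely many equal to zero, such that \[ u^n_{n,\mu}=\sum_{\nu\in\mathscr N_N(S)}c(\mu,\nu)\,u^N_{n,\nu}. \] Moreover (for these coefficients) there exists $K>0$, depending on $n$ and $N$, such that $\sup_{\mu\in\mathscr N_n(S)}\sum_{\nu\in\mathscr N_N(S)}|c(\mu,\nu)|<K$.
   Context: A point measure on $S$ is a measure on all subsets of $S$ of the form $\sum_{i=1}^d c_i\delta_{a_i}$ with $c_i$ nonnegative integers and $a_i\in S$; $\mathscr N_N(S)$ is the set of point measures of total mass $N$. For $x=(x_1,\ldots,x_N)\in S^N$ its type is $\epsilon_x=\sum_{i=1}^N\delta_{x_i}$, and for $\nu\in\mathscr N_N(S)$, $S^N(\nu)=\{x\in S^N:\epsilon_x=\nu\}$ (a finite set). $u_{N,\nu}$ is the uniform probability measure on $S^N(\nu)$, and $u^N_{n,\nu}$ is the image of $u_{N,\nu}$ under the projection $(x_1,\ldots,x_N)\mapsto(x_1,\ldots,x_n)$; these are finitely supported probability measures on $S^n$ (defined on all subsets). *)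

From mathcomp Require Import all_boot all_algebra.
From mathcomp Require Import boolp classical_sets fsbigop reals cardinality.
Set Implicit Arguments. Unset Strict Implicit. Unset Printing Implicit Defensive.
Import GRing.Theory Num.Theory.
Local Open Scope classical_set_scope.
Local Open Scope ring_scope.

Definition nmeasure (S : Type) := set S -> nat.

Definition point_measure (S : choiceType) (N : nat) : set (nmeasure S) :=
  [set nu | exists (d : nat) (c : 'I_d -> nat) (a : 'I_d -> S),
      (forall A : set S, nu A = (\sum_(i < d) c i * (a i \in A))%N) /\
      (\sum_(i < d) c i)%N = N].

Definition eps (S : choiceType) (N : nat) (x : N.-tuple S) : nmeasure S :=
  fun A => (\sum_(i < N) (tnth x i \in A))%N.

Definition SN (S : choiceType) (N : nat) (nu : nmeasure S) : set (N.-tuple S) :=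
  [set x | eps x = nu].

Definition unif (R : realType) (T : choiceType) (X : set T) (A : set T) : R :=
  (\sum_(x \in X `&` A) (1 : R)) / (\sum_(x \in X) (1 : R)).

Definition proj (S : Type) (n N : nat) (le : (n <= N)%N) (x : N.-tuple S)
  : n.-tuple S := [tuple tnth x (widen_ord le i) | i < n].

(* u^N_{n,nu} : image of the uniform measure u_{N,nu} under proj *)
Definition umarg (R : realType) (S : choiceType) (n N : nat) (le : (n <= N)%N)
  (nu : nmeasure S) (A : set (n.-tuple S)) : R :=
  unif R (SN nu) (proj le @^-1` A).

From mathcomp Require Import all_boot all_algebra all_fingroup.
From mathcomp Require Import boolp classical_sets fsbigop reals cardinality.
From mathcomp Require Import order.
Import Order.TTheory GRing.Theory Num.Theory.
From mathcomp Require Import zify.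
Local Open Scope classical_set_scope.
Local Open Scope ring_scope.
Set Implicit Arguments. Unset Strict Implicit. Unset Printing Implicit Defensive.

(* Everything reduces to the generic configuration: tuples over 'I_n and the
   tuple (0, ..., n-1), since every mu of mass n is the type of the image of
   that tuple under some map 'I_n -> S, and both sides of the decomposition
   commute with pushing forward along such maps; this also makes K independent
   of S.  For tuples y, t of length n, let P_y(t) be the probability that a
   uniform permutation of y equals t, i.e. the point mass of u^n_{n,eps y}.
   Pad y with N - n copies of a fixed letter z to a tuple x of length N.  By
   exchangeability, the marginal u^N_{n,eps x} is a mixture of the P_t over its
   atoms t; the atoms that are not permutations of y contain more copies of z
   than y does.  Solving for P_y and inducting on n minus the number of z's
   in y writes every P_y as a finite linear combination of the marginals. *)

Section TuplePermutation.
Variable T : Type.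

Definition permt (M : nat) (x : M.-tuple T) (s : 'S_M) : M.-tuple T :=
  [tuple tnth x (s i) | i < M].

Lemma permtM M (x : M.-tuple T) (a b : 'S_M) :
  permt (permt x a) b = permt x (b * a)%g.
Proof. by apply: eq_from_tnth => i; rewrite !tnth_mktuple permM. Qed.

Lemma permt1 M (x : M.-tuple T) : permt x 1%g = x.
Proof. by apply: eq_from_tnth => i; rewrite !tnth_mktuple perm1. Qed.

Lemma permtK M (s : 'S_M) : cancel (fun x : M.-tuple T => permt x s) (fun x => permt x s^-1).
Proof. by move=> x; rewrite permtM mulVg permt1. Qed.

Lemma permt_inj M (s : 'S_M) : injective (fun x : M.-tuple T => permt x s).
Proof. exact: can_inj (permtK s). Qed.

End TuplePermutation.

Lemma perm_eq_permtP (T : eqType) M (x y : M.-tuple T) :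
  perm_eq y x <-> exists s, y = permt x s.
Proof.
split=> [/tuple_permP [s hs]|[s ->]]; last by apply/tuple_permP; exists s.
by exists s; apply: val_inj; rewrite /= hs.
Qed.

Lemma permt_map (T S : Type) M (f : T -> S) (x : M.-tuple T) (s : 'S_M) :
  permt (map_tuple f x) s = map_tuple f (permt x s).
Proof. by apply: eq_from_tnth => i; rewrite !(tnth_mktuple, tnth_map). Qed.

Lemma proj_map (T S : Type) n N (hnN : (n <= N)%N) (f : T -> S) (x : N.-tuple T) :
  proj hnN (map_tuple f x) = map_tuple f (proj hnN x).
Proof. by apply: eq_from_tnth => i; rewrite !(tnth_mktuple, tnth_map). Qed.

Lemma proj_id (T : Type) n (x : n.-tuple T) : proj (leqnn n) x = x.
Proof.
by apply: eq_from_tnth => i; rewrite tnth_mktuple; congr tnth; apply: val_inj.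
Qed.

Lemma proj_take (T : Type) n N (hnN : (n <= N)%N) (x : N.-tuple T) :
  val (proj hnN x) = take n x.
Proof.
case: n hnN x => [|n] hnN x; first by rewrite take0; case: (proj hnN x) => -[].
have x0 : T := tnth x (widen_ord hnN ord0).
apply: (@eq_from_nth _ x0); first by rewrite size_tuple size_takel // size_tuple.
move=> i; rewrite size_tuple => lt_in.
by rewrite -(tnth_nth x0 _ (Ordinal lt_in)) tnth_mktuple (tnth_nth x0) nth_take.
Qed.

Lemma count_mem_proj (T : eqType) n N (hnN : (n <= N)%N) (x : N.-tuple T) a :
  (count_mem a (proj hnN x) <= count_mem a x)%N.
Proof.
rewrite proj_take -[X in (_ <= count _ X)%N](cat_take_drop n x) count_cat.
exact: leq_addr.
Qed.

Section WidenPerm.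
Variables (n N : nat) (hnN : (n <= N)%N).

Definition widen_perm_fun (s : 'S_n) (i : 'I_N) : 'I_N :=
  oapp (fun j => widen_ord hnN (s j)) i (insub (val i)).

Lemma widen_perm_fun_inj s : injective (widen_perm_fun s).
Proof.
move=> i k; rewrite /widen_perm_fun.
case: insubP => [j _ vj|Ni]; case: insubP => [l _ vl|Nk] /=.
- by move=> /(congr1 val) /= /val_inj /perm_inj ejl; apply: val_inj; rewrite -vj -vl ejl.
- by move=> e; move: Nk; rewrite -e /= ltn_ord.
- by move=> e; move: Ni; rewrite e /= ltn_ord.
- done.
Qed.

Definition widen_perm s : 'S_N := perm (@widen_perm_fun_inj s).

Lemma widen_permE s j : widen_perm s (widen_ord hnN j) = widen_ord hnN (s j).
Proof.
rewrite permE /widen_perm_fun /=; case: insubP => [j' _ vj|] /=; last by rewrite ltn_ord.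
by congr (widen_ord _ (s _)); apply: val_inj.
Qed.

Lemma proj_permt_widen (T : Type) s (x : N.-tuple T) :
  proj hnN (permt x (widen_perm s)) = permt (proj hnN x) s.
Proof. by apply: eq_from_tnth => i; rewrite !tnth_mktuple widen_permE. Qed.

End WidenPerm.

Section Types.
Variable S : choiceType.

Lemma eps_count M (x : M.-tuple S) (A : set S) :
  eps x A = count (fun a => a \in A) x.
Proof.
rewrite /eps -sum1_count big_tuple [RHS]big_mkcond /=.
by apply: eq_bigr => i _; case: (tnth x i \in A).
Qed.

Lemma eps_perm_eq M (x y : M.-tuple S) : eps y = eps x <-> perm_eq y x.
Proof.
split=> [e|/seq.permP e]; last by apply: funext => A; rewrite !eps_count e.
apply/seq.permP => P; have := congr1 (fun nu => nu [set a | P a]) e.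
have count_set (s : seq S) : count (fun a => a \in [set a | P a]) s = count P s.
  by apply: eq_count => a; apply/idP/idP; rewrite in_setE.
by rewrite !eps_count !count_set.
Qed.

Lemma point_measure_eps M (x : M.-tuple S) : point_measure M (eps x).
Proof.
exists M, (fun _ => 1%N), (tnth x); split; last by rewrite sum1_card card_ord.
by move=> A; apply: eq_bigr => i _; rewrite mul1n.
Qed.

Lemma point_measure_epsP M (nu : nmeasure S) :
  point_measure M nu -> exists x : M.-tuple S, eps x = nu.
Proof.
move=> [d [c [a [nuE sum_c]]]].
pose s := flatten [seq nseq (c i) (a i) | i <- enum 'I_d].
have size_s : size s == M.
  rewrite size_flatten /shape -map_comp sumnE big_map big_enum /= -sum_c.
  by apply/eqP; apply: eq_bigr => i _; rewrite /= size_nseq.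
exists (Tuple size_s); apply: funext => A; rewrite eps_count nuE /= count_flatten.
rewrite -map_comp sumnE big_map big_enum /=; apply: eq_bigr => i _.
by rewrite /= count_nseq mulnC.
Qed.

End Types.

Section UniformMeasureOnOrbits.
Variable R : realType.

Lemma sum_fiber (X Y : finType) (phi : X -> Y) (F : Y -> R) :
  \sum_x F (phi x) = \sum_y F y * \sum_x (phi x == y)%:R.
Proof.
transitivity (\sum_x \sum_y (phi x == y)%:R * F y).
  apply: eq_bigr => x _; rewrite (bigD1 (phi x)) //= eqxx mul1r big1 ?addr0 //.
  by move=> y /negPf; rewrite eq_sym => ->; rewrite mul0r.
rewrite exchange_big /=; apply: eq_bigr => y _; rewrite big_distrr /=.
by apply: eq_bigr => x _; rewrite mulrC.
Qed.

(* Each tuple of the orbit is hit by a coset of the stabiliser of x. *)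
Lemma sum_permt_orbit (T : eqType) M (x : M.-tuple T) (F : M.-tuple T -> R) :
  \sum_(s : 'S_M) F (permt x s) =
  (\sum_(s : 'S_M) (permt x s == x)%:R) * \sum_(y <- undup (codom (permt x))) F y.
Proof.
set orb := undup _.
have orb_permt s : permt x s \in orb by rewrite mem_undup codom_f.
transitivity (\sum_(s : 'S_M) \sum_(y <- orb) (permt x s == y)%:R * F y).
  apply: eq_bigr => s _; rewrite (bigD1_seq (permt x s)) ?undup_uniq //=.
  rewrite eqxx mul1r big1 ?addr0 // => y /negPf.
  by rewrite eq_sym => ->; rewrite mul0r.
rewrite exchange_big /= big_distrr /=; apply: eq_big_seq => y.
rewrite mem_undup => /codomP [s0 ->]; rewrite -big_distrl /=; congr (_ * _).
rewrite (reindex_inj (mulgI s0)) /=; apply: eq_bigr => s _.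
by rewrite -permtM (inj_eq (@permt_inj _ _ s0)).
Qed.

Lemma unif_eps (T : choiceType) M (x : M.-tuple T) (B : set (M.-tuple T)) :
  unif R (SN (eps x)) B = (\sum_(s : 'S_M) (permt x s \in B)%:R) / (M`!)%:R.
Proof.
set orb := undup (codom (permt x)).
have SN_orb : SN (eps x) = [set` orb].
  apply/seteqP; split => y /=.
    by move/eps_perm_eq/perm_eq_permtP => [s ->]; rewrite mem_undup codom_f.
  by rewrite mem_undup => /codomP [s ->]; apply/eps_perm_eq/perm_eq_permtP; exists s.
rewrite /unif SN_orb fsbig_mkcondr -!fsbig_seq ?undup_uniq //.
have -> : (M`!)%:R = \sum_(s : 'S_M) (1 : R) by rewrite sumr_const card_Sn.
rewrite (sum_permt_orbit x (fun y => (y \in B)%:R)) (sum_permt_orbit x (fun _ => 1)).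
have stab_neq0 : \sum_(s : 'S_M) (permt x s == x)%:R != 0 :> R.
  rewrite (bigD1 1%g) //= permt1 eqxx lt0r_neq0 // ltr_wpDr //.
  by apply: sumr_ge0 => s _; apply: ler0n.
rewrite -mulf_div divff // mul1r; congr (_ / _).
by apply: eq_bigr => y _; case: (y \in B).
Qed.

Lemma umarg_eps (S : choiceType) n N (hnN : (n <= N)%N) (x : N.-tuple S)
    (A : set (n.-tuple S)) :
  umarg R hnN (eps x) A =
  (\sum_(s : 'S_N) (proj hnN (permt x s) \in A)%:R) / (N`!)%:R.
Proof. by rewrite /umarg unif_eps. Qed.

Definition marg_pmf (T : eqType) n N (hnN : (n <= N)%N) (x : N.-tuple T)
    (t : n.-tuple T) : R :=
  (\sum_(s : 'S_N) (proj hnN (permt x s) == t)%:R) / (N`!)%:R.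

Lemma umarg_eps_map (S : choiceType) (T : finType) n N (hnN : (n <= N)%N)
    (f : T -> S) (x : N.-tuple T) (A : set (n.-tuple S)) :
  umarg R hnN (eps (map_tuple f x)) A =
  \sum_(t : n.-tuple T) (map_tuple f t \in A)%:R * marg_pmf hnN x t.
Proof.
rewrite umarg_eps /marg_pmf.
under eq_bigr do rewrite permt_map proj_map.
rewrite (sum_fiber (fun s => proj hnN (permt x s)) (fun t => (map_tuple f t \in A)%:R)).
by rewrite big_distrl /=; apply: eq_bigr => t _; rewrite mulrA.
Qed.

Lemma umarg_eps_map_lin (S : choiceType) (T : finType) n N (hnN : (n <= N)%N)
    (f : T -> S) (y : n.-tuple T) (w : N.-tuple T -> R) :
  (forall t, marg_pmf (leqnn n) y t = \sum_x w x * marg_pmf hnN x t) ->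
  forall A, umarg R (leqnn n) (eps (map_tuple f y)) A =
            \sum_x w x * umarg R hnN (eps (map_tuple f x)) A.
Proof.
move=> yE A; rewrite umarg_eps_map.
under eq_bigr do rewrite yE big_distrr /=.
rewrite exchange_big /=; apply: eq_bigr => x _; rewrite umarg_eps_map big_distrr /=.
by apply: eq_bigr => t _; rewrite mulrCA.
Qed.

End UniformMeasureOnOrbits.

Section MarginalSpan.
Variables (R : realType) (T : finType) (n N : nat) (hnN : (n <= N)%N).

Lemma marg_pmf_ge0 m M (le_mM : (m <= M)%N) (x : M.-tuple T) (t : m.-tuple T) :
  0 <= marg_pmf R le_mM x t.
Proof. by apply: divr_ge0 => //; apply: sumr_ge0 => s _; apply: ler0n. Qed.

Lemma marg_pmf_neq0 (x : N.-tuple T) (t : n.-tuple T) :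
  marg_pmf R hnN x t != 0 -> exists s, proj hnN (permt x s) = t.
Proof.
apply: contraNP => no_s; rewrite /marg_pmf big1 ?mul0r // => s _.
by case: eqP => // e; case: no_s; exists s.
Qed.

Lemma marg_pmf_perm_eq m M (le_mM : (m <= M)%N) (x y : M.-tuple T) (t : m.-tuple T) :
  perm_eq y x -> marg_pmf R le_mM y t = marg_pmf R le_mM x t.
Proof.
move=> /perm_eq_permtP [r ->]; rewrite /marg_pmf; congr (_ / _).
by rewrite [RHS](reindex_inj (mulIg r)) /=; apply: eq_bigr => s _; rewrite permtM.
Qed.

Lemma marg_pmf_permt (x : N.-tuple T) (t : n.-tuple T) (s : 'S_n) :
  marg_pmf R hnN x (permt t s) = marg_pmf R hnN x t.
Proof.
rewrite /marg_pmf; congr (_ / _).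
rewrite (reindex_inj (mulgI (widen_perm hnN s))) /=; apply: eq_bigr => r _.
by rewrite -permtM proj_permt_widen (inj_eq (@permt_inj _ _ s)).
Qed.

(* Exchangeability: the marginal is a mixture of the uniform laws on the orbits
   of its atoms. *)
Lemma marg_pmf_mixture (x : N.-tuple T) (t : n.-tuple T) :
  marg_pmf R hnN x t =
  \sum_(y : n.-tuple T) marg_pmf R hnN x y * marg_pmf R (leqnn n) y t.
Proof.
have fact_neq0 : (n`!)%:R != 0 :> R by rewrite pnatr_eq0 -lt0n fact_gt0.
transitivity (\sum_(s : 'S_n) marg_pmf R hnN x t / (n`!)%:R).
  rewrite -big_distrl /= sumr_const card_Sn -[_ *+ _]mulr_natr mulfK //.
rewrite /(marg_pmf _ (leqnn n)); under [RHS]eq_bigr do rewrite mulrA big_distrr.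
rewrite -[RHS]big_distrl exchange_big -big_distrl /=; congr (_ / _).
apply: eq_bigr => s _; rewrite (bigD1 (permt t s^-1)) //=.
rewrite proj_id permtM mulgV permt1 eqxx mulr1 marg_pmf_permt big1 ?addr0 //.
move=> y; rewrite proj_id; case: (permt y s =P t) => [<-|]; last by rewrite mulr0.
by rewrite permtK eqxx.
Qed.

Section Padding.
Variable z : T.

Lemma pad_size (y : n.-tuple T) : size (val y ++ nseq (N - n) z) == N.
Proof. by rewrite size_cat size_tuple size_nseq subnKC. Qed.

Definition pad (y : n.-tuple T) : N.-tuple T := Tuple (pad_size y).

Lemma proj_pad y : proj hnN (pad y) = y.
Proof.
apply: eq_from_tnth => i; rewrite tnth_mktuple (tnth_nth z) /= nth_cat size_tuple.
by rewrite ltn_ord -tnth_nth.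
Qed.

Lemma marg_pmf_pad_gt0 y : 0 < marg_pmf R hnN (pad y) y.
Proof.
rewrite /marg_pmf divr_gt0 ?ltr0n ?fact_gt0 // (bigD1 1%g) //= permt1 proj_pad eqxx.
by rewrite ltr_wpDr //; apply: sumr_ge0 => s _; apply: ler0n.
Qed.

(* Projecting a permutation of [pad y] can only trade letters of y for
   copies of z. *)
Lemma count_mem_lt_pad (y t : n.-tuple T) :
  marg_pmf R hnN (pad y) t != 0 -> ~~ perm_eq t y ->
  (count_mem z y < count_mem z t)%N.
Proof.
move=> /marg_pmf_neq0 [s <-]; set x := permt _ s.
have x_pad : perm_eq x (pad y) by apply/perm_eq_permtP; exists s.
apply: contraR; rewrite -leqNgt => le_z.
have le_count a : (count_mem a (proj hnN x) <= count_mem a y)%N.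
  case: (eqVneq a z) => [-> //|az].
  apply: leq_trans (count_mem_proj hnN x a) _.
  by rewrite (seq.permP x_pad) /= count_cat count_nseq /= eq_sym (negPf az) mul0n addn0.
have [y' sub_y' perm_y'] := (count_subseqP _ _).1 le_count.
have := size_subseq_leqif sub_y'.
rewrite -(perm_size perm_y') !size_tuple => -[_]; rewrite eqxx => /esym/eqP.
by move=> eq_y'; rewrite -eq_y'.
Qed.

End Padding.

Definition marg_span (f : n.-tuple T -> R) : Prop :=
  exists w : N.-tuple T -> R, forall t, f t = \sum_x w x * marg_pmf R hnN x t.

Lemma marg_span_ext (f g : n.-tuple T -> R) : f =1 g -> marg_span f -> marg_span g.
Proof. by move=> fg [w fE]; exists w => t; rewrite -fg. Qed.

Lemma marg_span_marg_pmf (x : N.-tuple T) : marg_span (marg_pmf R hnN x).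
Proof.
exists (fun x' => (x' == x)%:R) => t.
by rewrite (bigD1 x) //= eqxx mul1r big1 ?addr0 // => x' /negPf ->; rewrite mul0r.
Qed.

Lemma marg_span_lin (a b : R) (f g : n.-tuple T -> R) :
  marg_span f -> marg_span g -> marg_span (fun t => a * f t + b * g t).
Proof.
move=> [wf fE] [wg gE]; exists (fun x => a * wf x + b * wg x) => t.
rewrite fE gE !big_distrr -big_split /=; apply: eq_bigr => x _.
by rewrite mulrDl !mulrA.
Qed.

Lemma marg_span_sum (I : finType) (P : pred I) (a : I -> R)
    (F : I -> n.-tuple T -> R) :
  (forall i, P i -> a i != 0 -> marg_span (F i)) ->
  marg_span (fun t => \sum_(i | P i) a i * F i t).
Proof.
move=> spanF.
have wE i : exists wi : N.-tuple T -> R, P i -> forall t,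
    a i * F i t = \sum_x wi x * marg_pmf R hnN x t.
  case: (eqVneq (a i) 0) => [-> | ai_neq0].
    by exists (fun _ => 0) => _ t; rewrite mul0r big1 // => x _; rewrite mul0r.
  case: (boolP (P i)) => [Pi | notPi]; last by exists (fun _ => 0).
  have [wi wiE] := spanF i Pi ai_neq0.
  exists (fun x => a i * wi x) => _ t.
  by rewrite wiE big_distrr /=; apply: eq_bigr => x _; rewrite mulrA.
have [w {}wE] := choice wE.
exists (fun x => \sum_(i | P i) w i x) => t.
under eq_bigr => i Pi do rewrite (wE i Pi t).
by rewrite exchange_big /=; apply: eq_bigr => x _; rewrite big_distrl.
Qed.

(* Mixing the marginal of [pad z y] over its atoms isolates the uniform law of
   the orbit of y, up to atoms with more copies of z. *)
Lemma marg_span_step (z : T) (y : n.-tuple T) :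
  (forall t : n.-tuple T,
     (count_mem z y < count_mem z t)%N -> marg_span (marg_pmf R (leqnn n) t)) ->
  marg_span (marg_pmf R (leqnn n) y).
Proof.
move=> IH; set x := pad z y.
pose beta := \sum_(t : n.-tuple T | perm_eq t y) marg_pmf R hnN x t.
pose rest (t : n.-tuple T) := \sum_(t' : n.-tuple T | ~~ perm_eq t' y) marg_pmf R hnN x t' * marg_pmf R (leqnn n) t' t.
have beta_gt0 : 0 < beta.
  rewrite /beta (bigD1 y) ?perm_refl //= ltr_wpDr ?marg_pmf_pad_gt0 //.
  by apply: sumr_ge0 => t _; apply: marg_pmf_ge0.
have span_rest : marg_span rest.
  by apply: marg_span_sum => t' not_y ne0; apply: IH; apply: count_mem_lt_pad.
apply: (marg_span_ext (f := fun t => beta^-1 * marg_pmf R hnN x t + - beta^-1 * rest t));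
  last by apply: marg_span_lin => //; apply: marg_span_marg_pmf.
move=> t; rewrite marg_pmf_mixture (bigID (fun t' : n.-tuple T => perm_eq t' y)) /= -/(rest t).
have -> : \sum_(t' : n.-tuple T | perm_eq t' y) marg_pmf R hnN x t' * marg_pmf R (leqnn n) t' t =
          beta * marg_pmf R (leqnn n) y t.
  rewrite /beta big_distrl /=; apply: eq_bigr => t' t'_y.
  by rewrite (marg_pmf_perm_eq _ _ t'_y).
by rewrite mulrDr mulrA mulVf ?lt0r_neq0 // mul1r mulNr addrK.
Qed.

Lemma marg_span_marg_pmf_id (z : T) (y : n.-tuple T) :
  marg_span (marg_pmf R (leqnn n) y).
Proof.
move: {2}(n - count_mem z y)%N (leqnn (n - count_mem z y)) => k.
elim: k y => [|k IHk] y le_k; apply: (marg_span_step (z := z)) => t lt_yt;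
  have := count_size (pred1 z) t; rewrite size_tuple => le_tn.
- by exfalso; lia.
- by apply: IHk; lia.
Qed.

End MarginalSpan.

Section PushforwardCoefficients.
Variables (R : realType) (V : choiceType) (G : finType) (E : G -> V) (w : G -> R).

Definition pushcoef (v : V) : R := \sum_g w g * (E g == v)%:R.

Lemma pushcoef_out v : v \notin codom E -> pushcoef v = 0.
Proof.
move=> v_out; rewrite /pushcoef big1 // => g _; case: eqP => [Eg|]; last by rewrite mulr0.
by case/negP: v_out; rewrite -Eg codom_f.
Qed.

Lemma finite_pushcoef_support (P : set V) :
  finite_set [set v | P v /\ pushcoef v != 0].
Proof.
apply: sub_finite_set (finite_seq (codom E)) => v /= [_].
by apply: contraNP => /negP/pushcoef_out ->.
Qed.

Lemma fsbig_codom (P : set V) (H : V -> R) :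
  (forall g, P (E g)) -> (forall v, v \notin codom E -> H v = 0) ->
  \sum_(v \in P) H v = \sum_(v <- undup (codom E)) H v.
Proof.
move=> PE H0; rewrite (fsbigE (undup (codom E))) ?undup_uniq //; last first.
- by move=> v _; rewrite mem_undup => /H0.
- by move=> v /=; rewrite mem_undup => /codomP [g ->]; apply: PE.
rewrite big_seq_cond [RHS]big_seq; apply: eq_bigl => v.
case: (boolP (v \in _)) => //=; rewrite mem_undup => /codomP [g ->].
exact/mem_set/PE.
Qed.

Lemma sum_codom_eq (g : G) (u : V -> R) :
  \sum_(v <- undup (codom E)) (E g == v)%:R * u v = u (E g).
Proof.
rewrite (bigD1_seq (E g)) ?undup_uniq ?mem_undup ?codom_f //= eqxx mul1r.
by rewrite big1 ?addr0 // => v /negPf; rewrite eq_sym => ->; rewrite mul0r.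
Qed.

Lemma fsbig_pushcoef (P : set V) (u : V -> R) : (forall g, P (E g)) ->
  \sum_(v \in P) pushcoef v * u v = \sum_g w g * u (E g).
Proof.
move=> PE; rewrite (fsbig_codom PE) => [|v /pushcoef_out ->]; last by rewrite mul0r.
under eq_bigr do rewrite big_distrl.
rewrite exchange_big /=; apply: eq_bigr => g _.
by rewrite -sum_codom_eq big_distrr /=; apply: eq_bigr => v _; rewrite mulrA.
Qed.

Lemma fsbig_norm_pushcoef_le (P : set V) : (forall g, P (E g)) ->
  \sum_(v \in P) `|pushcoef v| <= \sum_g `|w g|.
Proof.
move=> PE; rewrite (fsbig_codom PE) => [|v /pushcoef_out ->]; last by rewrite normr0.
apply: le_trans (_ : \sum_(v <- undup (codom E)) \sum_g `|w g| * (E g == v)%:R <= _).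
  apply: ler_sum => v _; apply: le_trans (ler_norm_sum _ _ _) _.
  by apply: ler_sum => g _; rewrite normrM normr_nat.
rewrite exchange_big /=; apply: ler_sum => g _.
rewrite -big_distrr /= (eq_bigr (fun v => (E g == v)%:R * 1)) => [|v _]; last first.
  by rewrite mulr1.
by rewrite sum_codom_eq mulr1.
Qed.

End PushforwardCoefficients.

Lemma umarg_point_measure_decomp (R : realType) (S : choiceType) n N
    (hnN : (n <= N)%N) (w : N.-tuple 'I_n -> R) :
  (forall t, marg_pmf R (leqnn n) (ord_tuple n) t = \sum_x w x * marg_pmf R hnN x t) ->
  forall mu : nmeasure S, point_measure n mu ->
  exists c : nmeasure S -> R,
    [/\ finite_set [set nu | point_measure N nu /\ c nu != 0],
        forall A, umarg R (leqnn n) mu A =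
                  \sum_(nu \in point_measure N) c nu * umarg R hnN nu A &
        \sum_(nu \in point_measure N) `|c nu| <= \sum_x `|w x|].
Proof.
move=> wE mu /point_measure_epsP [y <-].
pose E (x : N.-tuple 'I_n) := eps (map_tuple (tnth y) x).
have PE x : point_measure N (E x) by apply: point_measure_eps.
exists (pushcoef E w); split.
- exact: finite_pushcoef_support.
- move=> A; rewrite fsbig_pushcoef //.
  have -> : y = map_tuple (tnth y) (ord_tuple n).
    by apply: eq_from_tnth => i; rewrite tnth_map tnth_ord_tuple.
  exact: umarg_eps_map_lin.
- exact: fsbig_norm_pushcoef_le.
Qed.

Theorem lemma1 (R : realType) (n N : nat) (hn : (0 < n)%N) (hnN : (n <= N)%N) :
  exists K : R, 0 < K /\
  forall S : choiceType,
  exists c : nmeasure S -> nmeasure S -> R,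
    (forall mu, point_measure n mu ->
       finite_set [set nu | point_measure N nu /\ c mu nu != 0] /\
       (forall A : set (n.-tuple S),
          umarg R (leqnn n) mu A =
          \sum_(nu \in point_measure N) c mu nu * umarg R hnN nu A)) /\
    (forall mu, point_measure n mu ->
       \sum_(nu \in point_measure N) `|c mu nu| < K).
Proof.
have [w wE] := marg_span_marg_pmf_id R hnN (Ordinal hn) (ord_tuple n).
exists (\sum_x `|w x| + 1); split.
  by rewrite ltr_wpDl ?ltr01 //; apply: sumr_ge0 => x _.
move=> S.
have c_mu (mu : nmeasure S) : exists c : nmeasure S -> R, point_measure n mu ->
    [/\ finite_set [set nu | point_measure N nu /\ c nu != 0],
        forall A, umarg R (leqnn n) mu A =
                  \sum_(nu \in point_measure N) c nu * umarg R hnN nu A &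
        \sum_(nu \in point_measure N) `|c nu| <= \sum_x `|w x|].
  case: (pselect (point_measure n mu)) => [mu_n|]; last by exists (fun=> 0).
  by have [c hc] := umarg_point_measure_decomp wE mu_n; exists c.
have [c cE] := choice c_mu.
exists c; split=> mu /cE [c_fin c_dec c_norm]; first by [].
by rewrite (le_lt_trans c_norm) // ltrDl ltr01.
Qed.
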